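(* Let $\sigma$ be a 2-structure and $X\subsetneq V(\sigma)$ with $\sigma[X]$ prime; write $\overline{X}=V(\sigma)\setminus X$. Suppose Statement (S3) holds (there is no $Y\subseteq\overline{X}$ with $|Y|=3$ and $\sigma[X\cup Y]$ prime). Let $e,f\in E(\sigma)$ be distinct and $\alpha\in X$. If the outside graph $\Gamma_{(\sigma,\overline{X})}$ has no isolated vertices, then: (1) if $\langle X\rangle^{(e,f)}_\sigma\neq\emptyset$ and $\langle X\rangle^{(f,e)}_\sigma\neq\emptyset$, then $(x,y)\in e$ and $(y,x)\in f$ for all $x\in\langle X\rangle^{(e,f)}_\sigma$ and $y\in\langle X\rangle^{(f,e)}_\sigma$; (2) if $X^{(e,f)}_\sigma(\alpha)\neq\emptyset$ and $X^{(f,e)}_\sigma(\alpha)\neq\emptyset$, then $(x,y)\in e$ and $(y,x)\in f$ for all $x\in X^{(e,f)}_\sigma(\alpha)$ and $y\in X^{(f,e)}_\sigma(\alpha)$.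
   Context: A 2-structure $\sigma$ consists of a vertex set $V(\sigma)$ and an equivalence relation $\equiv_\sigma$ on ordered pairs of distinct vertices; $E(\sigma)$ is its set of classes; $\sigma[W]$ is the induced 2-structure on $W$. A module is a set $M$ such that for all $x,y\in M$ and $v\notin M$, $(x,v)\equiv_\sigma(y,v)$ and $(v,x)\equiv_\sigma(v,y)$; $\sigma$ is prime if $|V(\sigma)|\geq3$ and its only modules are $\emptyset$, $V(\sigma)$ and singletons. Given $\sigma[X]$ prime: $\langle X\rangle_\sigma=\{v\in\overline{X}: X\text{ is a module of }\sigma[X\cup\{v\}]\}$; for $\alpha\in X$, $X_\sigma(\alpha)=\{v\in\overline{X}:\{\alpha,v\}\text{ is a module of }\sigma[X\cup\{v\}]\}$. For $e,f\in E(\sigma)$: $\langle X\rangle^{(e,f)}_\sigma=\{v\in\langle X\rangle_\sigma:(v,\beta)\in e,(\beta,v)\in f\}$ for any $\beta\in X$; $X^{(e,f)}_\sigma(\alpha)=\{v\in X_\sigma(\alpha):(v,\alpha)\in e,(\alpha,v)\in f\}$. The outside graph $\Gamma_{(\sigma,\overline{X})}$ has vertex set $\overline{X}$ and edges the 2-element sets $Y\subseteq\overline{X}$ with $\sigma[X\cup Y]$ prime. *)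

(* 2-structures on an arbitrary (possibly infinite) vertex type T;
   sets are predicates T -> Prop. *)
Set Implicit Arguments.

Section TwoStructures.
Variable T : Type.

(* sigma = (T, r): r is an equivalence relation on ordered pairs of distinct vertices *)
Definition is_2structure (r : T * T -> T * T -> Prop) : Prop :=
  (forall p, fst p <> snd p -> r p p) /\
  (forall p q, fst p <> snd p -> fst q <> snd q -> r p q -> r q p) /\
  (forall p q s, fst p <> snd p -> fst q <> snd q -> fst s <> snd s ->
      r p q -> r q s -> r p s).

(* e is an element of E(sigma): an equivalence class of r *)
Definition is_class (r : T * T -> T * T -> Prop) (e : T * T -> Prop) : Prop :=
  exists p, fst p <> snd p /\
    forall q, e q <-> (fst q <> snd q /\ r p q).

Definition setU (A B : T -> Prop) : T -> Prop := fun v => A v \/ B v.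
Definition set1 (a : T) : T -> Prop := fun v => v = a.
Definition set2 (a b : T) : T -> Prop := fun v => v = a \/ v = b.
Definition set3 (a b c : T) : T -> Prop := fun v => v = a \/ v = b \/ v = c.
Definition compl (A : T -> Prop) : T -> Prop := fun v => ~ A v.

(* M is a module of the induced 2-structure sigma[W] *)
Definition is_module (r : T * T -> T * T -> Prop) (W M : T -> Prop) : Prop :=
  (forall x, M x -> W x) /\
  (forall x y v, M x -> M y -> W v -> ~ M v ->
     r (x, v) (y, v) /\ r (v, x) (v, y)).

Definition is_prime (r : T * T -> T * T -> Prop) (W : T -> Prop) : Prop :=
  (exists a b c, W a /\ W b /\ W c /\ a <> b /\ a <> c /\ b <> c) /\
  (forall M, is_module r W M ->
     (forall x, ~ M x) \/ (forall x, M x <-> W x) \/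
     (exists a, forall x, M x <-> x = a)).

Definition closure (r : T * T -> T * T -> Prop) (X : T -> Prop) : T -> Prop :=
  fun v => ~ X v /\ is_module r (setU X (set1 v)) X.

Definition Xalpha (r : T * T -> T * T -> Prop) (X : T -> Prop) (alpha : T) : T -> Prop :=
  fun v => ~ X v /\ is_module r (setU X (set1 v)) (set2 alpha v).

(* <X>^(e,f)_sigma  (the condition is required for every beta in X) *)
Definition closure_ef (r : T * T -> T * T -> Prop) (X : T -> Prop)
    (e f : T * T -> Prop) : T -> Prop :=
  fun v => closure r X v /\ forall beta, X beta -> e (v, beta) /\ f (beta, v).

Definition Xalpha_ef (r : T * T -> T * T -> Prop) (X : T -> Prop)
    (e f : T * T -> Prop) (alpha : T) : T -> Prop :=
  fun v => Xalpha r X alpha v /\ e (v, alpha) /\ f (alpha, v).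

(* {v, w} is an edge of the outside graph Gamma_(sigma, Xbar) *)
Definition outside_edge (r : T * T -> T * T -> Prop) (X : T -> Prop) (v w : T) : Prop :=
  v <> w /\ ~ X v /\ ~ X w /\ is_prime r (setU X (set2 v w)).

Definition no_isolated_vertex (r : T * T -> T * T -> Prop) (X : T -> Prop) : Prop :=
  forall v, ~ X v -> exists w, outside_edge r X v w.

Definition S3 (r : T * T -> T * T -> Prop) (X : T -> Prop) : Prop :=
  ~ exists a b c, ~ X a /\ ~ X b /\ ~ X c /\ a <> b /\ a <> c /\ b <> c /\
      is_prime r (setU X (set3 a b c)).

End TwoStructures.

(* Let x, y be the two vertices to compare and w a neighbour of x in the outside
   graph: X + {x, w} is prime while, by (S3), X + {x, y, w} is not.  Adding one
   vertex y to a prime structure P leaves either P itself or some pair {a, y} as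
   a module.  If P is a module, (x, y) and (y, x) lie in the classes of (alpha, y)
   and (y, alpha).  If {a, y} is, then a = x would put (x, alpha) and (y, alpha)
   into the same class although one is in e and the other in f; a = w would make
   w behave towards X like y, hence like x, so X + {x, w} would have a nontrivial
   module; and a in X transfers the classes of (x, a) and (a, x) to (x, y) and
   (y, x) -- in part (2) a must then be alpha, since otherwise {alpha, a} would be
   a module of the prime X. *)

From Stdlib Require Import Classical.
Set Implicit Arguments.
Unset Strict Implicit.

Ltac members := unfold setU, set1, set2, set3 in *;
  intuition (subst; first [congruence | tauto | auto]).

Section TwoStructure.
Variable T : Type.
Variable r : T * T -> T * T -> Prop.
Hypothesis r_2structure : is_2structure r.

Lemma rel_refl a b : a <> b -> r (a, b) (a, b).
Proof. intros; apply (proj1 r_2structure (a, b)); auto. Qed.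

Lemma rel_sym a b c d : a <> b -> c <> d -> r (a, b) (c, d) -> r (c, d) (a, b).
Proof. intros; apply (proj1 (proj2 r_2structure) (a, b) (c, d)); auto. Qed.

Lemma rel_trans a b c d g h : a <> b -> c <> d -> g <> h ->
  r (a, b) (c, d) -> r (c, d) (g, h) -> r (a, b) (g, h).
Proof. intros; apply (proj2 (proj2 r_2structure) (a, b) (c, d) (g, h)); auto. Qed.

Lemma class_proper e a b : is_class r e -> e (a, b) -> a <> b.
Proof. intros [p [_ He]] Hab. apply He in Hab. exact (proj1 Hab). Qed.

Lemma class_rel e a b c d : is_class r e -> e (a, b) -> e (c, d) -> r (c, d) (a, b).
Proof.
  intros [[p1 p2] [Hp He]] Hab Hcd; simpl in Hp.
  apply He in Hab as [nab Hab]; apply He in Hcd as [ncd Hcd]; simpl in *.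
  apply rel_trans with p1 p2; auto. apply rel_sym; auto.
Qed.

Lemma class_closed e a b c d : is_class r e -> e (a, b) -> r (c, d) (a, b) -> c <> d ->
  e (c, d).
Proof.
  intros He Hab Hr ncd. assert (nab := class_proper He Hab).
  destruct He as [[p1 p2] [Hp He]]; simpl in Hp.
  apply He in Hab as [_ Hab]. apply He. split; [exact ncd|].
  apply rel_trans with a b; auto. apply rel_sym; auto.
Qed.

Lemma classes_disjoint e f a b : is_class r e -> is_class r f ->
  ~ (forall p, e p <-> f p) -> e (a, b) -> f (a, b) -> False.
Proof.
  intros He Hf Hef Ea Fa. apply Hef. intros [c d]. split; intro H.
  - apply class_closed with a b; auto. apply (class_rel He Ea H). exact (class_proper He H).
  - apply class_closed with a b; auto. apply (class_rel Hf Fa H). exact (class_proper Hf H).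
Qed.

Lemma module_ext W M N : (forall z, M z <-> N z) -> is_module r W M -> is_module r W N.
Proof.
  intros HMN [HW Hm]. split.
  - intros z Hz; apply HW, HMN, Hz.
  - intros u u' v Hu Hu' Hv Hnv. apply Hm; try apply HMN; auto.
    intro Hc; apply Hnv, HMN, Hc.
Qed.

Lemma module_restrict W M P : is_module r W M -> (forall z, P z -> W z) ->
  is_module r P (fun z => M z /\ P z).
Proof.
  intros [HW Hm] HP. split.
  - tauto.
  - intros u u' v [Hu _] [Hu' _] Hv Hnv. apply Hm; auto; tauto.
Qed.

Lemma module_of_pivot W M p : M p -> (forall z, M z -> W z) ->
  (forall u v, M u -> W v -> ~ M v -> r (u, v) (p, v) /\ r (v, u) (v, p)) ->
  is_module r W M.
Proof.
  intros Hp HW Hpiv. split; auto. intros u u' v Hu Hu' Hv Hnv.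
  assert (nv : forall z, M z -> z <> v) by (intros z Hz E; subst; auto).
  assert (nv' : forall z, M z -> v <> z) by (intros z Hz E; subst; auto).
  destruct (Hpiv u v Hu Hv Hnv) as [A B], (Hpiv u' v Hu' Hv Hnv) as [C D].
  split.
  - apply rel_trans with p v; auto. apply rel_sym; auto.
  - apply rel_trans with v p; auto. apply rel_sym; auto.
Qed.

Lemma prime_module_full P M a b c : is_prime r P -> is_module r P M ->
  M a -> M b -> a <> b -> P c -> M c.
Proof.
  intros [_ Hp] Hm Ha Hb Hab Hc.
  destruct (Hp M Hm) as [H|[H|[z H]]].
  - exfalso; eapply H; eauto.
  - apply H, Hc.
  - exfalso; apply Hab. transitivity z; [apply H|symmetry; apply H]; auto.
Qed.

Lemma prime_avoid2 P p q : is_prime r P -> exists c, P c /\ c <> p /\ c <> q.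
Proof.
  intros [(a & b & c & Ha & Hb & Hc & Hab & Hac & Hbc) _].
  destruct (classic (a <> p /\ a <> q)) as [|Na]; [eauto|].
  destruct (classic (b <> p /\ b <> q)) as [|Nb]; [eauto|].
  exists c. apply not_and_or in Na; apply not_and_or in Nb.
  destruct Na as [Na|Na]; apply NNPP in Na; destruct Nb as [Nb|Nb]; apply NNPP in Nb;
    subst; auto.
Qed.

Definition trivial_module (W M : T -> Prop) : Prop :=
  (forall x, ~ M x) \/ (forall x, M x <-> W x) \/ (exists a, forall x, M x <-> x = a).

Lemma not_prime_nontrivial_module W a b c : W a -> W b -> W c ->
  a <> b -> a <> c -> b <> c -> ~ is_prime r W ->
  exists M, is_module r W M /\ ~ trivial_module W M.
Proof.
  intros Ha Hb Hc Hab Hac Hbc nW. apply NNPP; intro N. apply nW. split.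
  - exists a, b, c; tauto.
  - intros M HM. apply NNPP; intro Hnt. apply N; eauto.
Qed.

(* A nontrivial module of P + y cuts P in a trivial module of the prime P. *)
Lemma prime_extension_cases P W y : is_prime r P ->
  (forall z, W z <-> P z \/ z = y) -> ~ P y -> ~ is_prime r W ->
  is_module r W P \/ exists a, P a /\ is_module r W (set2 a y).
Proof.
  intros HP HW nPy nW.
  assert (PW : forall z, P z -> W z) by (intro z; rewrite HW; tauto).
  destruct (proj1 HP) as (a & b & c & Ha & Hb & Hc & Hab & Hac & Hbc).
  destruct (not_prime_nontrivial_module (PW a Ha) (PW b Hb) (PW c Hc) Hab Hac Hbc nW)
    as [M [HM Hnt]].
  assert (MW : forall z, M z <-> (M z /\ P z) \/ (z = y /\ M y)).
  { intro z; split.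
    - intro Mz. destruct (proj1 (HW z) (proj1 HM z Mz)) as [|E]; [|subst]; tauto.
    - intros [[]|[-> ]]; auto. }
  destruct (proj2 HP _ (module_restrict HM PW)) as [C|[C|[p C]]];
    destruct (classic (M y)) as [My|nMy].
  - exfalso; apply Hnt; right; right. exists y; intro z.
    rewrite MW; specialize (C z); intuition (subst; auto).
  - exfalso; apply Hnt; left. intro z; rewrite MW; specialize (C z); tauto.
  - exfalso; apply Hnt; right; left. intro z; rewrite MW, HW; specialize (C z).
    intuition (subst; auto).
  - left. eapply module_ext; [|exact HM]. intro z; rewrite MW; specialize (C z); tauto.
  - right. exists p; split; [apply (proj2 (C p) eq_refl)|].
    eapply module_ext; [|exact HM]. intro z; rewrite MW, C; unfold set2.
    intuition (subst; auto).
  - exfalso; apply Hnt; right; right. exists p; intro z; rewrite MW, C; tauto.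
Qed.

Lemma closure_pair_not_prime X x w : is_prime r X ->
  closure r X x -> closure r X w -> ~ is_prime r (setU X (set2 x w)).
Proof.
  intros HX [nXx Mx] [nXw Mw] HP.
  destruct (proj1 HX) as (a & b & _ & Ha & Hb & _ & Hab & _).
  apply nXx. apply (prime_module_full (M := X) (a := a) (b := b) HP); [|auto..|members].
  split; [members|]. intros u u' v Hu Hu' [Hv|[Hv|Hv]] Hnv; [tauto|subst v..].
  - apply (proj2 Mx); members.
  - apply (proj2 Mw); members.
Qed.

Lemma closure_of_twin X W y a : closure r X y -> ~ X a ->
  is_module r W (set2 a y) -> (forall z, X z -> W z) -> closure r X a.
Proof.
  intros [nXy My] nXa Hay XW. split; [exact nXa|]. split; [members|].
  intros u u' v Hu Hu' Hv Hnv. assert (v = a) by members. subst v.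
  destruct (proj2 Hay a y u) as [A B]; [members..|].
  destruct (proj2 Hay a y u') as [C D]; [members..|].
  destruct (proj2 My u u' y) as [E F]; [members..|].
  split.
  - apply rel_trans with u y; [members..|exact B|].
    apply rel_trans with u' y; [members..|exact E|apply rel_sym; [members..|exact D]].
  - apply rel_trans with y u; [members..|exact A|].
    apply rel_trans with y u'; [members..|exact F|apply rel_sym; [members..|exact C]].
Qed.

Lemma Xalpha_pair_not_prime X alpha x w : is_prime r X -> X alpha ->
  Xalpha r X alpha x -> Xalpha r X alpha w -> ~ is_prime r (setU X (set2 x w)).
Proof.
  intros HX Ha [nXx Mx] [nXw Mw] HP.
  destruct (prime_avoid2 alpha alpha HX) as [c [Hc [nca _]]].
  enough (set3 alpha x w c) by members.
  apply (prime_module_full (M := set3 alpha x w) (a := alpha) (b := x) HP);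
    [|members..].
  apply (module_of_pivot (p := alpha)); [members..|].
  intros u v Hu Hv Hnv. assert (X v /\ v <> alpha) as [Xv nva] by members.
  destruct Hu as [Hu|[Hu|Hu]]; subst u.
  - split; apply rel_refl; members.
  - apply (proj2 Mx); members.
  - apply (proj2 Mw); members.
Qed.

Lemma Xalpha_of_twin X W alpha y a : Xalpha r X alpha y -> X alpha ->
  is_module r W (set2 a y) -> (forall z, X z -> W z) ->
  is_module r (setU X (set1 a)) (set2 alpha a).
Proof.
  intros [nXy My] Ha Hay XW.
  apply (module_of_pivot (p := alpha)); [members..|].
  intros u v Hu Hv Hnv. assert (X v /\ v <> alpha /\ v <> a) as (Xv & nva & nv) by members.
  destruct Hu; subst u.
  - split; apply rel_refl; members.
  - destruct (proj2 Hay a y v) as [A B]; [members..|].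
    destruct (proj2 My y alpha v) as [C D]; [members..|].
    split.
    + apply rel_trans with y v; [members..|exact A|exact C].
    + apply rel_trans with v y; [members..|exact B|exact D].
Qed.

Section OutsideGraph.
Variables (X : T -> Prop) (e f : T * T -> Prop).
Hypotheses (HX : is_prime r X) (HS3 : S3 r X) (Hiso : no_isolated_vertex r X).
Hypotheses (He : is_class r e) (Hf : is_class r f) (Hef : ~ (forall p, e p <-> f p)).

Lemma cross_of_twin W x y a : e (x, a) -> f (a, x) -> W x -> x <> a -> x <> y ->
  is_module r W (set2 a y) -> e (x, y) /\ f (y, x).
Proof.
  intros Ea Fa Wx nxa nxy Hay.
  destruct (proj2 Hay y a x) as [A B]; [members..|].
  split; [apply class_closed with x a|apply class_closed with a x]; auto.
Qed.

Lemma outside_edge_extension_cases alpha x y w : X alpha -> ~ X y ->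
  e (x, alpha) -> e (alpha, y) -> f (y, alpha) -> outside_edge r X x w ->
  x <> y -> y <> w ->
  e (x, y) /\ f (y, x) \/
  (exists a, X a /\ is_module r (setU X (set3 x y w)) (set2 a y)) \/
  is_module r (setU X (set3 x y w)) (set2 w y).
Proof.
  intros Ha nXy Exa Eay Fya (nxw & nXx & nXw & Pw) nxy nyw.
  assert (nW : ~ is_prime r (setU X (set3 x y w))).
  { intro Hp. apply HS3. exists x, y, w. auto 10. }
  destruct (prime_extension_cases (W := setU X (set3 x y w)) (y := y) Pw)
    as [HM|[a [[Xa|[ -> | -> ]] HM]]]; [members|members|exact nW| | | |].
  - left. destruct (proj2 HM x alpha y) as [A B]; [members..|].
    split; [apply class_closed with alpha y|apply class_closed with y alpha]; members.
  - right; left; eauto.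
  - exfalso. destruct (proj2 HM y x alpha) as [A _]; [members..|].
    apply (classes_disjoint He Hf Hef (a := y) (b := alpha)); auto.
    apply class_closed with x alpha; members.
  - right; right; exact HM.
Qed.

Lemma closure_ef_cross x y : closure_ef r X e f x -> closure_ef r X f e y ->
  e (x, y) /\ f (y, x).
Proof.
  intros [Cx EFx] [Cy FEy].
  assert (nXx := proj1 Cx); assert (nXy := proj1 Cy).
  destruct (proj1 HX) as (alpha & _ & _ & Ha & _).
  destruct (Hiso nXx) as [w Hw]; pose proof Hw as (_ & _ & nXw & Pw).
  assert (nyw : y <> w) by (intro; subst; exact (closure_pair_not_prime HX Cx Cy Pw)).
  destruct (EFx alpha Ha) as [Exa _], (FEy alpha Ha) as [Fya Eay].
  assert (nxy : x <> y) by (intro; subst; exact (classes_disjoint He Hf Hef Exa Fya)).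
  destruct (outside_edge_extension_cases Ha nXy Exa Eay Fya Hw nxy nyw)
    as [|[[a [Xa Hay]]|Hwy]]; auto.
  - destruct (EFx a Xa) as [Exa' Fax].
    apply (cross_of_twin (W := setU X (set3 x y w)) (a := a)); members.
  - exfalso. apply (closure_pair_not_prime HX Cx (w := w)); [|exact Pw].
    apply (closure_of_twin (W := setU X (set3 x y w)) Cy); members.
Qed.

Lemma Xalpha_ef_cross alpha x y : X alpha ->
  Xalpha_ef r X e f alpha x -> Xalpha_ef r X f e alpha y -> e (x, y) /\ f (y, x).
Proof.
  intros Ha [Ax [Exa Fax]] [Ay [Fya Eay]].
  assert (nXx := proj1 Ax); assert (nXy := proj1 Ay).
  destruct (Hiso nXx) as [w Hw]; pose proof Hw as (_ & _ & nXw & Pw).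
  assert (nyw : y <> w) by (intro; subst; exact (Xalpha_pair_not_prime HX Ha Ax Ay Pw)).
  assert (nxy : x <> y) by (intro; subst; exact (classes_disjoint He Hf Hef Exa Fya)).
  destruct (outside_edge_extension_cases Ha nXy Exa Eay Fya Hw nxy nyw)
    as [|[[a [Xa Hay]]|Hwy]]; auto.
  - destruct (classic (a = alpha)) as [->|naa].
    + apply (cross_of_twin (W := setU X (set3 x y w)) (a := alpha)); members.
    + exfalso. destruct (prime_avoid2 alpha a HX) as [c [Hc [nca nc]]].
      enough (set2 alpha a c /\ X c) by members.
      apply (prime_module_full (M := fun z => set2 alpha a z /\ X z)
        (a := alpha) (b := a) HX); [|members..].
      apply (module_restrict (W := setU X (set1 a))); [|members].
      apply (Xalpha_of_twin (W := setU X (set3 x y w)) Ay); members.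
  - exfalso. apply (Xalpha_pair_not_prime HX Ha Ax (w := w)); [|exact Pw].
    split; [members|].
    apply (Xalpha_of_twin (W := setU X (set3 x y w)) Ay); members.
Qed.

End OutsideGraph.
End TwoStructure.

Theorem lemma3p7 (T : Type) (r : T * T -> T * T -> Prop) (X : T -> Prop)
  (e f : T * T -> Prop) (alpha : T) :
  is_2structure r ->
  (exists v, ~ X v) ->
  is_prime r X ->
  S3 r X ->
  is_class r e -> is_class r f ->
  ~ (forall p, e p <-> f p) ->
  X alpha ->
  no_isolated_vertex r X ->
  ((exists v, closure_ef r X e f v) -> (exists v, closure_ef r X f e v) ->
     forall x y, closure_ef r X e f x -> closure_ef r X f e y ->
       e (x, y) /\ f (y, x)) /\
  ((exists v, Xalpha_ef r X e f alpha v) -> (exists v, Xalpha_ef r X f e alpha v) ->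
     forall x y, Xalpha_ef r X e f alpha x -> Xalpha_ef r X f e alpha y ->
       e (x, y) /\ f (y, x)).
Proof.
  intros H2 _ HX HS3 He Hf Hef Ha Hiso. split; intros _ _ x y.
  - exact (closure_ef_cross H2 HX HS3 Hiso He Hf Hef (x := x) (y := y)).
  - exact (Xalpha_ef_cross H2 HX HS3 Hiso He Hf Hef Ha (x := x) (y := y)).
Qed.
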